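(* Let $k$ be a field of characteristic zero, $V$ a $k$-vector space, $V_z=V\otimes_kk((z))$, and $\varphi\in\mathrm{End}_k(V)$ finite potent. Then the series $$\exp_z(\varphi)=1+z\varphi+\frac{z^2\varphi^2}{2}+\frac{z^3\varphi^3}{3!}+\cdots$$ defines a well-defined element of $\mathrm{Aut}_{k((z))}(V_z)$, and the endomorphism $\bar\varphi=\exp_z(\varphi)-1=z\varphi+\frac{z^2\varphi^2}{2}+\cdots$ of $V_z$ is finite potent.
   Context: An endomorphism $\psi$ of a vector space $U$ is finite potent if $\psi^nU$ is finite dimensional for some $n$. *)

From Stdlib Require Import ClassicalEpsilon.
From HB Require Import structures.
From mathcomp Require Import all_boot all_order all_algebra.
Set Implicit Arguments. Unset Strict Implicit. Unset Printing Implicit Defensive.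
Import Order.TTheory GRing.Theory Num.Theory.
Local Open Scope ring_scope.

(* Formal series sum_j a_j z^j are represented by their coefficient
   functions int -> T. *)

Definition bounded_below (T : zmodType) (a : int -> T) : Prop :=
  exists N : int, forall j : int, j < N -> a j = 0.

(* a chosen lower bound of the support (meaningful when bounded_below a);
   all the sums below do not depend on which valid lower bound is used. *)
Definition lbound (T : zmodType) (a : int -> T) : int :=
  epsilon (inhabits 0%R) (fun N : int => forall j : int, j < N -> a j = 0).

Section Defs.
Variables (k : fieldType) (V : lmodType k).

Definition in_span (s : seq V) (v : V) : Prop :=
  exists c : 'I_(size s) -> k, v = \sum_(i < size s) c i *: s`_i.

(* psi is finite potent: psi^n V is finite dimensional for some n,
   i.e. contained in the span of a finite family *)
Definition finite_potent (psi : {linear V -> V}) : Prop :=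
  exists n : nat, exists s : seq V, forall v : V, in_span s (iter n psi v).

Definition laurent (f : int -> k) : Prop := bounded_below f.

(* V_z = V (x)_k k((z)), realized inside V((z)) as the Laurent series whose
   coefficients all lie in a finite dimensional subspace of V *)
Definition Vz (a : int -> V) : Prop :=
  bounded_below a /\ exists s : seq V, forall m : int, in_span s (a m).

(* k((z))-scalar action on V_z: (f . a)_m = sum_{i+j=m} f_i a_j *)
Definition lscale (f : int -> k) (a : int -> V) : int -> V :=
  fun m => \sum_(i < (absz (m - lbound f - lbound a)%R).+1)
             f (lbound f + i%:Z) *: a (m - lbound f - i%:Z).

(* exp_z(phi) applied to a = sum_j a_j z^j : coefficient of z^m is
   sum_{n >= 0} phi^n (a_{m-n}) / n!  (a finite sum) *)
Definition expz (phi : V -> V) (a : int -> V) : int -> V :=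
  fun m => \sum_(n < (absz (m - lbound a)%R).+1)
             (n`!%:R)^-1 *: iter n phi (a (m - n%:Z)).

Definition phibar (phi : V -> V) (a : int -> V) : int -> V :=
  fun m => expz phi a m - a m.

Definition in_spanz (s : seq (int -> V)) (a : int -> V) : Prop :=
  exists c : 'I_(size s) -> (int -> k),
    (forall i, laurent (c i)) /\
    forall m : int, a m = \sum_(i < size s) lscale (c i) (nth (fun _ => 0) s i) m.

(* an endomorphism psi of V_z is finite potent: psi^n V_z is a finite
   dimensional k((z))-subspace for some n *)
Definition finite_potent_z (psi : (int -> V) -> (int -> V)) : Prop :=
  exists n : nat, exists s : seq (int -> V),
    (forall i : 'I_(size s), Vz (nth (fun _ => 0) s i)) /\
    forall a, Vz a -> in_spanz s (iter n psi a).

End Defs.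

(* On the coefficient of [z^m], [exp_z(phi)] acts by the finite sum
   [sum_n phi^n (a_(m-n)) / n!], which is [k((z))]-linear; in characteristic
   zero [e^x e^-x = 1] coefficientwise, so [exp_z(-phi)] is its inverse.
   Finite potency keeps the orbit of a finite-dimensional subspace under [phi]
   finite-dimensional, so [exp_z(phi)] preserves [V_z].  Since the constant
   term of [exp_z(phi)] is [1], each coefficient of [phibar^N a] lies in
   [phi^N V]; a finite spanning family [t] of [phi^N V], viewed as constant
   series, therefore spans [phibar^N V_z] over [k((z))]. *)

From Stdlib Require Import ClassicalEpsilon FunctionalExtensionality.
From HB Require Import structures.
From mathcomp Require Import all_boot all_order all_algebra zify ring.
Set Implicit Arguments. Unset Strict Implicit. Unset Printing Implicit Defensive.
Import Order.TTheory GRing.Theory Num.Theory.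
Local Open Scope ring_scope.

Section IterLinear.
Variables (R : pzRingType) (V : lmodType R) (phi : {linear V -> V}) (n : nat).

Lemma iter_linear0 : iter n phi 0 = 0.
Proof. by elim: n => //= m ->; rewrite linear0. Qed.

Lemma iter_linearD u v : iter n phi (u + v) = iter n phi u + iter n phi v.
Proof. by elim: n => //= m ->; rewrite linearD. Qed.

Lemma iter_linearZ c v : iter n phi (c *: v) = c *: iter n phi v.
Proof. by elim: n => //= m ->; rewrite linearZ. Qed.

Lemma iter_linear_sum (I : Type) (r : seq I) (P : pred I) (F : I -> V) :
  iter n phi (\sum_(i <- r | P i) F i) = \sum_(i <- r | P i) iter n phi (F i).
Proof. exact: (big_morph _ iter_linearD iter_linear0). Qed.

End IterLinear.

Section Sums.
Variable T : nmodType.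

Lemma eq_big_ord_vanish (F : nat -> T) K K' :
  (forall n, (K <= n)%N -> F n = 0) -> (forall n, (K' <= n)%N -> F n = 0) ->
  \sum_(i < K) F i = \sum_(i < K') F i.
Proof.
wlog le_KK' : K K' / (K <= K')%N => [W FK FK'|FK _].
  by case: (leqP K K') => [/W|/ltnW/W W']; [apply | symmetry; apply: W'].
rewrite (big_ord_widen _ _ le_KK') big_mkcond; apply: eq_bigr => i _.
by case: ltnP => // /FK ->.
Qed.

Lemma eq_big_window (G : int -> T) (N N' : int) (K K' : nat) :
  (forall j, j < N -> G j = 0) -> (forall j, j < N' -> G j = 0) ->
  (forall j, N + K%:Z <= j -> G j = 0) -> (forall j, N' + K'%:Z <= j -> G j = 0) ->
  \sum_(i < K) G (N + i%:Z) = \sum_(i < K') G (N' + i%:Z).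
Proof.
wlog le_N'N : N N' K K' / N' <= N => [W GN GN' GNK GN'K'|GN GN' GNK GN'K'].
  by case: (leP N' N) => [/W|/ltW/W W']; [apply | symmetry; apply: W'].
set d := absz (N - N').
rewrite (eq_big_ord_vanish (F := fun i => G (N' + i%:Z)) (K' := d + K)); last 2 first.
- by move=> n le_n; apply: GN'K'; lia.
- by move=> n le_n; apply: GNK; lia.
rewrite -(big_mkord xpredT (fun i => G (N' + i%:Z))).
rewrite (@big_cat_nat _ _ _ d 0 (d + K)) ?leq_addr //= [X in _ = X + _]big1_seq ?add0r;
  last first.
  by move=> i /andP[_]; rewrite mem_index_iota => /andP[_ lt_id]; apply: GN; lia.
rewrite (big_addn 0 (d + K) d) addKn big_mkord; apply: eq_bigr => i _.
by congr G; lia.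
Qed.

Lemma big_ord_square_antidiag (F : nat -> nat -> T) K :
  (forall n p, (K <= n + p)%N -> F n p = 0) ->
  \sum_(n < K) \sum_(p < K) F n p = \sum_(q < K) \sum_(n < q.+1) F n (q - n)%N.
Proof.
move=> FK.
transitivity (\sum_(q < K) \sum_(n < K) (if (n <= q)%N then F n (q - n)%N else 0)).
  rewrite [RHS]exchange_big /=; apply: eq_bigr => n _.
  rewrite -(big_mkord xpredT (F n)).
  rewrite -(big_mkord xpredT (fun q => if (n <= q)%N then F n (q - n)%N else 0)).
  rewrite [RHS](@big_cat_nat _ _ _ n 0 K) ?(ltnW (ltn_ord n)) //=.
  rewrite [X in _ = X + _]big1_seq ?add0r; last first.
    by move=> q /andP[_]; rewrite mem_index_iota => /andP[_ lt_qn]; rewrite leqNgt lt_qn.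
  rewrite (big_addn 0 K n); under [RHS]eq_bigr do rewrite leq_addl addnK.
  by rewrite !big_mkord; apply: eq_big_ord_vanish => p hp; apply: FK; lia.
apply: eq_bigr => q _.
transitivity (\sum_(n < q.+1) (if (n <= q)%N then F n (q - n)%N else 0)).
  apply: (eq_big_ord_vanish (F := fun n => if (n <= q)%N then F n (q - n)%N else 0)).
    by move=> n hn; case: ifP => // le_nq; have := ltn_ord q; lia.
  by move=> n; rewrite ltnNge => /negPf ->.
by apply: eq_bigr => n _; rewrite -ltnS ltn_ord.
Qed.

End Sums.

Definition vanish_below (T : zmodType) (a : int -> T) (N : int) :=
  forall j, j < N -> a j = 0.

Lemma vanish_below_lbound (T : zmodType) (a : int -> T) :
  bounded_below a -> vanish_below a (lbound a).
Proof. exact: epsilon_spec. Qed.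

Section Span.
Variables (k : fieldType) (V : lmodType k).
Implicit Types (s t : seq V) (v w : V).

Lemma in_span0 s : in_span s 0.
Proof. by exists (fun _ => 0); rewrite big1 // => i _; rewrite scale0r. Qed.

Lemma in_spanD s v w : in_span s v -> in_span s w -> in_span s (v + w).
Proof.
move=> [c ->] [d ->]; exists (fun i => c i + d i).
by rewrite -big_split; apply: eq_bigr => i _; rewrite scalerDl.
Qed.

Lemma in_spanZ s (c : k) v : in_span s v -> in_span s (c *: v).
Proof.
move=> [d ->]; exists (fun i => c * d i).
by rewrite scaler_sumr; apply: eq_bigr => i _; rewrite scalerA.
Qed.

Lemma in_span_sum s (I : Type) (r : seq I) (P : pred I) (F : I -> V) :
  (forall i, P i -> in_span s (F i)) -> in_span s (\sum_(i <- r | P i) F i).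
Proof. by apply: big_ind; [exact: in_span0 | exact: in_spanD]. Qed.

Lemma in_span_mem s v : v \in s -> in_span s v.
Proof.
move=> vs; pose j := Ordinal (etrans (index_mem v s) vs).
exists (fun i => (i == j)%:R); rewrite (bigD1 j) //= eqxx scale1r nth_index //.
by rewrite big1 ?addr0 // => i /negPf ->; rewrite scale0r.
Qed.

Lemma in_span_subset s t v :
  {in s, forall x, in_span t x} -> in_span s v -> in_span t v.
Proof.
by move=> st [c ->]; apply: in_span_sum => i _; apply/in_spanZ/st/mem_nth.
Qed.

End Span.

Section Series.
Variables (k : fieldType) (V : lmodType k).
Implicit Types (phi psi chi : {linear V -> V}) (a b : int -> V) (f : int -> k).

Lemma expzE phi a (L : int) (K : nat) m : vanish_below a L -> m - L < K%:Z ->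
  expz phi a m = \sum_(n < K) (n`!%:R)^-1 *: iter n phi (a (m - n%:Z)).
Proof.
move=> aL ltK; have /vanish_below_lbound a_lb : bounded_below a by exists L.
apply: (eq_big_ord_vanish (F := fun n => (n`!%:R)^-1 *: iter n phi (a (m - n%:Z))))
  => n le_n.
  by rewrite a_lb ?iter_linear0 ?scaler0 //; lia.
by rewrite aL ?iter_linear0 ?scaler0 //; lia.
Qed.

Lemma expz_vanish_below phi a L : vanish_below a L -> vanish_below (expz phi a) L.
Proof.
move=> aL m ltmL; rewrite /expz big1 // => n _.
by rewrite aL ?iter_linear0 ?scaler0 //; lia.
Qed.

Lemma lscaleE f a (Nf Na : int) (K : nat) m :
  vanish_below f Nf -> vanish_below a Na -> m - Nf - Na < K%:Z ->
  lscale f a m = \sum_(i < K) f (Nf + i%:Z) *: a (m - (Nf + i%:Z)).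
Proof.
move=> fN aN ltK.
have /vanish_below_lbound f_lb : bounded_below f by exists Nf.
have /vanish_below_lbound a_lb : bounded_below a by exists Na.
rewrite /lscale; under eq_bigr => i _ do rewrite -[m - _ - i%:Z]addrA -opprD.
apply: (eq_big_window (G := fun j => f j *: a (m - j))) => j hj.
- by rewrite f_lb // scale0r.
- by rewrite fN // scale0r.
- by rewrite a_lb ?scaler0 //; lia.
- by rewrite aN ?scaler0 //; lia.
Qed.

Lemma expz_lscale phi f a b : laurent f -> Vz a -> Vz b -> forall m,
  expz phi (fun j => lscale f a j + b j) m = lscale f (expz phi a) m + expz phi b m.
Proof.
move=> /vanish_below_lbound fN [/vanish_below_lbound aN _] [/vanish_below_lbound bN _] m.
set Nf := lbound f in fN *; set Na := lbound a in aN *; set Nb := lbound b in bN *.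
set L := Order.min (Nf + Na) Nb.
have fab_L : vanish_below (fun j => lscale f a j + b j) L.
  move=> j ltjL; rewrite bN; last by rewrite /L in ltjL; lia.
  by rewrite (lscaleE (K := 0) fN aN) ?big_ord0 ?addr0 //; rewrite /L in ltjL; lia.
set K := (absz (m - L)%R + absz (m - Nf - Na)%R + absz (m - Nb)%R).+1.
rewrite (expzE phi (K := K) fab_L); last by rewrite /K; lia.
rewrite (expzE phi (K := K) bN); last by rewrite /K; lia.
rewrite (lscaleE (K := K) fN (expz_vanish_below phi aN)); last by rewrite /K; lia.
under eq_bigr do rewrite iter_linearD scalerDr.
rewrite big_split /=; congr (_ + _).
transitivity (\sum_(n < K) \sum_(i < K) f (Nf + i%:Z) *:
    ((n`!%:R)^-1 *: iter n phi (a (m - (Nf + i%:Z) - n%:Z)))).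
  apply: eq_bigr => n _; rewrite (lscaleE (K := K) fN aN); last by rewrite /K; lia.
  rewrite iter_linear_sum scaler_sumr; apply: eq_bigr => i _.
  by rewrite iter_linearZ !scalerA mulrC [m - n%:Z - _]addrAC.
rewrite exchange_big /=; apply: eq_bigr => i _.
by rewrite (expzE phi (K := K) aN) ?scaler_sumr //; rewrite /K; lia.
Qed.

Lemma iter_opp psi chi n v : (forall w, chi w = - psi w) ->
  iter n chi v = (-1) ^+ n *: iter n psi v.
Proof.
move=> chiE; elim: n => [|n IH] /=; first by rewrite scale1r.
by rewrite IH chiE linearZ exprS -scalerA scaleN1r.
Qed.

Hypothesis char0 : [pchar k] =i pred0.

Lemma natr_fact_neq0 n : (n`!%:R : k) != 0.
Proof. by rewrite ((pcharf0P _).1 char0) -lt0n fact_gt0. Qed.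

(* [(-1 + 1)^q = 0^q] expanded by the binomial theorem and divided by [q!]. *)
Lemma exp_mul_expN_coef q :
  \sum_(n < q.+1) ((n`!%:R)^-1 * ((q - n)`!%:R)^-1 * (-1) ^+ (q - n) : k) = (q == 0)%:R.
Proof.
have := exprDn (-1 : k) 1 q; rewrite addNr expr0n => binomial.
have -> : ((q == 0)%:R : k) = (q`!%:R)^-1 * (q == 0)%:R.
  by case: q {binomial} => [|q]; rewrite ?mulr0 // fact0 invr1 mul1r.
rewrite binomial mulr_sumr; apply: eq_bigr => i _.
rewrite expr1n mulr1 -(bin_fact (leq_ord i)) !natrM -mulr_natr.
have binP : ('C(q, i)%:R : k) != 0.
  by rewrite ((pcharf0P _).1 char0) -lt0n bin_gt0 -ltnS.
by field; rewrite !natr_fact_neq0 binP.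
Qed.

(* Grouping the double sum by [q = n + p], the coefficient of [psi^q] is the
   coefficient of [x^q] in [e^x e^-x]. *)
Lemma expzK psi chi b m : (forall v, chi v = - psi v) -> bounded_below b ->
  expz psi (expz chi b) m = b m.
Proof.
move=> chiE /vanish_below_lbound bL; set L := lbound b in bL *.
set K := (absz (m - L)%R).+1.
have ltK : m - L < K%:Z by rewrite /K; lia.
pose F n p : V := ((n`!%:R)^-1 * (p`!%:R)^-1 * (-1) ^+ p : k)
  *: iter (n + p) psi (b (m - (n + p)%:Z)).
rewrite (expzE psi (K := K) (expz_vanish_below chi bL)) //.
transitivity (\sum_(n < K) \sum_(p < K) F n p).
  apply: eq_bigr => n _; rewrite (expzE chi (K := K) bL); last by lia.
  rewrite iter_linear_sum scaler_sumr; apply: eq_bigr => p _.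
  rewrite iter_linearZ (iter_opp _ _ chiE) iter_linearZ !scalerA /F iterD PoszD opprD addrA.
  by rewrite mulrA [_ * (-1) ^+ p]mulrC mulrA.
rewrite big_ord_square_antidiag => [|n p le_Knp]; last first.
  by rewrite /F bL ?iter_linear0 ?scaler0 //; lia.
transitivity (\sum_(q < K) (q == 0)%:R *: iter q psi (b (m - q%:Z))).
  apply: eq_bigr => q _; rewrite -exp_mul_expN_coef scaler_suml.
  by apply: eq_bigr => n _; rewrite /F subnKC // -ltnS ltn_ord.
rewrite /K big_ord_recl /= scale1r subr0 big1 ?addr0 // => i _.
by rewrite scale0r.
Qed.

End Series.

Section FinitePotent.
Variables (k : fieldType) (V : lmodType k).
Implicit Types (phi psi : {linear V -> V}) (a c : int -> V) (s t : seq V).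

Lemma finite_potent_opp phi : finite_potent phi -> finite_potent (\- phi).
Proof.
case=> N [t spanN]; exists N, t => v.
by rewrite (@iter_opp _ _ phi (\- phi) _ _ (fun=> erefl)); apply/in_spanZ/spanN.
Qed.

(* Powers below [N] contribute the finitely many vectors [psi^n s_i]; the
   higher ones land in the span [t] of [psi^N V]. *)
Lemma finite_potent_iter_span psi s : finite_potent psi ->
  exists S, forall n v, in_span s v -> in_span S (iter n psi v).
Proof.
case=> N [t spanN]; exists (flatten [seq map (iter n psi) s | n <- iota 0 N] ++ t).
move=> n _ [c ->]; rewrite iter_linear_sum; apply: in_span_sum => i _.
rewrite iter_linearZ; apply: in_spanZ; have xs : s`_i \in s := mem_nth 0 (ltn_ord i).
have [ltnN|leNn] := ltnP n N.
  apply/in_span_mem; rewrite mem_cat; apply/orP; left; apply/flattenP.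
  exists (map (iter n psi) s); last exact: map_f.
  by apply: (map_f (fun n => map _ s)); rewrite mem_iota.
rewrite -(subnKC leNn) iterD; apply: in_span_subset (spanN _) => y yt.
by apply: in_span_mem; rewrite mem_cat yt orbT.
Qed.

Lemma Vz_expz psi a : finite_potent psi -> Vz a -> Vz (expz psi a).
Proof.
move=> fp [/vanish_below_lbound aL [s span_a]]; split.
  by exists (lbound a); apply: expz_vanish_below.
have [S spanS] := finite_potent_iter_span s fp.
by exists S => m; apply: in_span_sum => n _; apply/in_spanZ/spanS.
Qed.

Lemma phibar_vanish_below phi c L : vanish_below c L -> vanish_below (phibar phi c) L.
Proof. by move=> cL m ltmL; rewrite /phibar (expz_vanish_below phi cL) // cL ?subr0. Qed.

(* The [n = 0] term of [exp_z(phi)] cancels against [1], so [phibar] raises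
   the power of [phi] through which every coefficient factors. *)
Lemma phibar_in_image phi c r : (forall j, exists w, c j = iter r phi w) ->
  forall m, exists w, phibar phi c m = iter r.+1 phi w.
Proof.
move=> c_img m; rewrite /phibar /expz big_ord_recl /= fact0 invr1 scale1r subr0.
rewrite addrAC subrr add0r; apply: (big_ind (fun v => exists w, v = iter r.+1 phi w)).
- by exists 0; rewrite iter_linear0.
- by move=> _ _ [u ->] [w ->]; exists (u + w); rewrite iter_linearD.
move=> i _; have [w ->] := c_img (m - (bump 0 i)%:Z).
exists ((i.+1`!%:R)^-1 *: iter i phi w).
by rewrite iter_linearZ -!iterD /bump leq0n add1n addSn addnC.
Qed.

Lemma iter_phibar_in_image phi r a m : exists w, iter r (phibar phi) a m = iter r phi w.
Proof.
elim: r m => [|r IH] m; first by exists (a m).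
exact: phibar_in_image.
Qed.

Definition const_series (v : V) : int -> V := fun j => if j == 0 then v else 0.

Lemma Vz_const v : Vz (const_series v).
Proof.
split; first by exists 0 => j ltj0; rewrite /const_series ifF //; apply/eqP; lia.
exists [:: v] => m; rewrite /const_series; case: ifP => _; last exact: in_span0.
by apply: in_span_mem; rewrite mem_seq1.
Qed.

Lemma lscale_const f v m : laurent f -> lscale f (const_series v) m = f m *: v.
Proof.
move=> /vanish_below_lbound fN; set Nf := lbound f in fN *.
have v0 : vanish_below (const_series v) 0.
  by move=> j ltj0; rewrite /const_series ifF //; apply/eqP; lia.
rewrite (lscaleE (K := (absz (m - Nf)%R).+1) fN v0); last by lia.
have [ltmN|leNm] := ltP m Nf.
  rewrite fN // scale0r big1 // => i _.
  by rewrite /const_series ifF ?scaler0 //; apply/eqP; lia.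
rewrite (bigD1 ord_max) //= big1 ?addr0 => [|i ne_i_max].
  have -> : Nf + (absz (m - Nf)%R)%:Z = m by lia.
  by rewrite subrr /const_series eqxx.
rewrite /const_series ifF ?scaler0 //; apply/eqP => m_eq.
by move/eqP: ne_i_max; apply; apply: val_inj => /=; lia.
Qed.

(* The coefficients of [a] are expanded on [t] with a choice of scalars that
   vanish where [a] does, so each coordinate is a Laurent series. *)
Lemma in_spanz_const t a : bounded_below a -> (forall m, in_span t (a m)) ->
  in_spanz (map const_series t) a.
Proof.
move=> /vanish_below_lbound aL span_a.
pose coords m (c : 'I_(size t) -> k) :=
  a m = \sum_(i < size t) c i *: t`_i /\ (m < lbound a -> forall i, c i = 0).
have [C C_spec] : exists C, forall m, coords m (C m).
  apply: ClassicalEpsilon.choice => m; rewrite /coords.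
  have [ltm|_] := ltP m (lbound a); last by have [c ->] := span_a m; exists c.
  exists (fun _ => 0); split=> //; rewrite aL // big1 // => i _; exact: scale0r.
rewrite /in_spanz size_map; exists (fun i m => C m i); split.
  by move=> i; exists (lbound a) => m ltm; apply: (C_spec m).2.
move=> m; rewrite (C_spec m).1; apply: eq_bigr => i _.
by rewrite (nth_map 0) // lscale_const //; exists (lbound a) => j ltj; apply: (C_spec j).2.
Qed.

Lemma finite_potent_z_phibar phi : finite_potent phi -> finite_potent_z (phibar phi).
Proof.
case=> N [t spanN]; exists N, (map const_series t); split.
  move=> i; have lt_it : (i < size t)%N by rewrite -(size_map const_series) ltn_ord.
  by rewrite (nth_map 0 _ _ lt_it); apply: Vz_const.
move=> a [/vanish_below_lbound aL _]; apply: in_spanz_const.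
  exists (lbound a); elim: N {spanN} => //= N IH.
  exact: phibar_vanish_below.
by move=> m; have [w ->] := iter_phibar_in_image phi N a m; apply: spanN.
Qed.

End FinitePotent.

Theorem proposition4p1 (k : fieldType) (V : lmodType k) (phi : {linear V -> V}) :
  [pchar k] =i pred0 ->
  finite_potent phi ->
  [/\ (* exp_z(phi) maps V_z into V_z *)
      (forall a, Vz a -> Vz (expz phi a)),
      (* it is k((z))-linear *)
      (forall (f : int -> k) (a b : int -> V), laurent f -> Vz a -> Vz b ->
         forall m, expz phi (fun j => lscale f a j + b j) m
                   = lscale f (expz phi a) m + expz phi b m),
      (* it is surjective on V_z *)
      (forall b, Vz b -> exists a, Vz a /\ forall m, expz phi a m = b m),
      (* it is injective on V_z *)
      (forall a a', Vz a -> Vz a' ->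
         (forall m, expz phi a m = expz phi a' m) -> forall m, a m = a' m) &
      (* exp_z(phi) - 1 is finite potent on V_z *)
      finite_potent_z (phibar phi)].
Proof.
move=> char0 fp; split.
- by move=> a; apply: Vz_expz.
- exact: expz_lscale.
- move=> b b_Vz; exists (expz (\- phi) b); split.
    by apply: Vz_expz b_Vz; apply: finite_potent_opp.
  by move=> m; apply: expzK => //; case: b_Vz.
- have expzNK b : bounded_below b -> forall m, expz (\- phi) (expz phi b) m = b m.
    by move=> b_lb m; apply: expzK => // v; rewrite opprK.
  move=> a a' [a_lb _] [a'_lb _] /functional_extensionality eq_exp m.
  by rewrite -(expzNK a a_lb) eq_exp expzNK.
- exact: finite_potent_z_phibar.
Qed.
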